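(* For every integer $d>1$, $\lambda^*(d,2^{d-1})=1-2^{-d}$.
   Context: For integers $n\ge d\ge 1$, a $d$-flat in $\mathbb{F}_2^n$ is a set $x_0+U$ with $x_0\in\mathbb{F}_2^n$ and $U$ a $d$-dimensional linear subspace of $\mathbb{F}_2^n$. For $A\subseteq\mathbb{F}_2^n$ and an integer $0\le s\le 2^d$, $\lambda^*(n,d,s,A)$ denotes the fraction of $d$-flats $Q$ in $\mathbb{F}_2^n$ with $|Q\cap A|=s$. Let $\lambda^*(n,d,s)=\max_{A\subseteq\mathbb{F}_2^n}\lambda^*(n,d,s,A)$; this is non-increasing in $n$, and $\lambda^*(d,s)=\lim_{n\to\infty}\lambda^*(n,d,s)$. *)

From HB Require Import structures.
From mathcomp Require Import all_boot all_order all_algebra.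
From mathcomp Require Import all_classical all_reals all_analysis.
From mathcomp Require Import Rstruct Rstruct_topology.
Set Implicit Arguments. Unset Strict Implicit. Unset Printing Implicit Defensive.
Import Order.TTheory GRing.Theory Num.Theory.
Local Open Scope ring_scope.

Notation F2n n := 'rV['F_2]_n.

(* Q is a d-flat: Q = x0 + U with U a d-dimensional linear subspace,
   U given as the row space of a d x n matrix of rank d. *)
Definition is_flat (n d : nat) (Q : {set F2n n}) : bool :=
  [exists x0 : F2n n, exists U : 'M['F_2]_(d, n),
     (\rank U == d) && (Q == [set x0 + v *m U | v : 'rV['F_2]_d])].

Definition flats (n d : nat) : {set {set F2n n}} := [set Q | is_flat d Q].

Definition lambdaA (n d s : nat) (A : {set F2n n}) : Rdefinitions.R :=
  (#|[set Q in flats n d | #|Q :&: A| == s]|)%:R / (#|flats n d|)%:R.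

Definition lambdan (n d s : nat) : Rdefinitions.R :=
  \big[Num.max/0]_(A : {set F2n n}) lambdaA d s A.

From HB Require Import structures.
From mathcomp Require Import all_boot all_order all_algebra.
From mathcomp Require Import all_classical all_reals all_analysis.
From mathcomp Require Import Rstruct Rstruct_topology.
From mathcomp Require Import ring lra.
Import Order.TTheory GRing.Theory Num.Theory.

(* For A in F_2^n put h := 1 - 2 * 1_A, so that a d-flat Q meets A in exactly
   2^(d-1) points iff S_Q := \sum_(x in Q) h x vanishes, while always
   S_Q^2 <= 4^d.  The affine group maps flats to flats and acts transitively
   on ordered pairs of distinct points, so the flats form a 2-design and the
   second moment \sum_Q S_Q^2 is determined by \sum h and \sum h^2 = 2^n; it is
   at least #flats * 2^d (2^n - 2^d) / (2^n - 1).  Hence at most a fraction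
   1 - (2^n - 2^d) / (2^d (2^n - 1)) of the flats is balanced, and a
   coordinate half-space attains this: every flat is either split evenly by
   it or lies on one side, and \sum h = 0.  This exact value tends to
   1 - 2^-d. *)

Set Implicit Arguments. Unset Strict Implicit. Unset Printing Implicit Defensive.
Local Open Scope ring_scope.

Section BlockDesign.
Variables (R : comPzRingType) (T : finType) (F : {set {set T}}).

Definition pair_count (x y : T) := #|[set Q in F | (x \in Q) && (y \in Q)]|.

Lemma sum_indicator (P : pred {set T}) :
  \sum_(Q in F) (P Q)%:R = #|[set Q in F | P Q]|%:R :> R.
Proof.
rewrite -sumr_const [RHS]big_mkcond [LHS]big_mkcond /=.
by apply: eq_bigr => Q _; rewrite inE; case: (Q \in F); case: (P Q).
Qed.

Lemma sum_block_card : \sum_(Q in F) #|Q|%:R = \sum_x (pair_count x x)%:R :> R.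
Proof.
under eq_bigr => Q _ do rewrite -sum1_card natr_sum big_mkcond /=.
rewrite exchange_big; apply: eq_bigr => x _; rewrite -sum_indicator.
by apply: eq_bigr => Q _; rewrite andbb; case: (x \in Q).
Qed.

Lemma sum_sqr_block_sums (h : T -> R) :
  \sum_(Q in F) (\sum_(x in Q) h x) ^+ 2 =
  \sum_x \sum_y h x * h y * (pair_count x y)%:R.
Proof.
transitivity (\sum_(Q in F) \sum_x \sum_y
                h x * h y * ((x \in Q) && (y \in Q))%:R).
  apply: eq_bigr => Q _; rewrite expr2 big_mkcond mulr_suml.
  apply: eq_bigr => x _; rewrite big_mkcond mulr_sumr.
  by apply: eq_bigr => y _; case: (x \in Q); case: (y \in Q);
     rewrite /= ?mulr1 ?mulr0 ?mul0r.
rewrite exchange_big; apply: eq_bigr => x _.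
by rewrite exchange_big; apply: eq_bigr => y _; rewrite -mulr_sumr sum_indicator.
Qed.

Lemma pair_count_bij (g g' : T -> T) : cancel g g' -> cancel g' g ->
    (forall Q, Q \in F -> g @: Q \in F) -> (forall Q, Q \in F -> g' @: Q \in F) ->
  forall x y, pair_count (g x) (g y) = pair_count x y.
Proof.
have count_le (u u' : T -> T) : cancel u u' -> (forall Q, Q \in F -> u @: Q \in F) ->
    forall x y, (pair_count x y <= pair_count (u x) (u y))%N.
  move=> uK uF x y; have imK : cancel (fun Q : {set T} => u @: Q) (fun Q => u' @: Q).
    by move=> Q; rewrite -imset_comp (eq_imset _ uK) imset_id.
  rewrite /pair_count -(card_imset _ (can_inj imK)); apply: subset_leq_card.
  apply/fintype.subsetP => Q' /imsetP[Q]; rewrite inE => /andP[QF /andP[xQ yQ]] ->.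
  by rewrite inE uF //= !imset_f.
move=> gK g'K gF g'F x y; apply/eqP; rewrite eqn_leq (count_le _ g') //.
by rewrite -{2}(gK x) -{2}(gK y) (count_le _ g).
Qed.

Variables (k r lam : nat).
Hypothesis block_card : forall Q, Q \in F -> #|Q| = k.
Hypothesis point_count : forall x, pair_count x x = r.
Hypothesis pair_count_neq : forall x y, x != y -> pair_count x y = lam.

Lemma design_sum_sqr (h : T -> R) :
  \sum_(Q in F) (\sum_(x in Q) h x) ^+ 2 =
  r%:R * \sum_x h x ^+ 2 + lam%:R * ((\sum_x h x) ^+ 2 - \sum_x h x ^+ 2).
Proof.
rewrite sum_sqr_block_sums.
transitivity (\sum_x (r%:R * h x ^+ 2 + lam%:R * (h x * \sum_y h y - h x ^+ 2))).
  apply: eq_bigr => x _; rewrite (bigD1 x) //= [in RHS](bigD1 x) //= point_count.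
  rewrite (eq_bigr (fun y => h x * h y * lam%:R)); last first.
    by move=> y yx; rewrite pair_count_neq // eq_sym.
  rewrite -mulr_suml -mulr_sumr; ring.
by rewrite big_split /= -!mulr_sumr sumrB expr2 mulr_suml.
Qed.

Lemma design_second_moment (h : T -> R) :
  #|T|%:R * (#|T|%:R - 1) * \sum_(Q in F) (\sum_(x in Q) h x) ^+ 2 =
  #|F|%:R * k%:R * ((#|T|%:R - 1) * \sum_x h x ^+ 2
                    + (k%:R - 1) * ((\sum_x h x) ^+ 2 - \sum_x h x ^+ 2)).
Proof.
have blocks_r : #|F|%:R * k%:R = #|T|%:R * r%:R :> R.
  have := sum_block_card; under eq_bigr => Q QF do rewrite block_card //.
  by under [RHS]eq_bigr do rewrite point_count; rewrite !sumr_const !mulr_natl.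
have blocks_lam : #|F|%:R * k%:R ^+ 2 =
    r%:R * #|T|%:R + lam%:R * (#|T|%:R ^+ 2 - #|T|%:R) :> R.
  have := design_sum_sqr (fun _ => 1); under eq_bigr => Q QF do
    rewrite sumr_const block_card //.
  by rewrite !expr1n !sumr_const => E; rewrite mulr_natl E.
rewrite design_sum_sqr.
move: (#|F|%:R : R) (k%:R : R) (#|T|%:R : R) (r%:R : R) (lam%:R : R)
  (\sum_x h x ^+ 2) (\sum_x h x) blocks_r blocks_lam => f kk N c1 c2 H S E1 E2.
have -> : N * (N - 1) * (c1 * H + c2 * (S ^+ 2 - H)) =
  (N - 1) * H * (N * c1) + (S ^+ 2 - H) * (c1 * N + c2 * (N ^+ 2 - N) - N * c1)
  by ring.
rewrite -E1 -E2; ring.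
Qed.

End BlockDesign.

Lemma rV_unitmx_ebase (K : fieldType) n (u : 'rV[K]_n) : u != 0 ->
  exists c (M : 'M[K]_n), [/\ c != 0, M \in unitmx & u = c *: (pid_mx 1 *m M)].
Proof.
move=> u0; exists (col_ebase u 0 0), (row_ebase u); split.
- by have := col_ebase_unit u; rewrite unitmxE det_mx11 unitfE.
- exact: row_ebase_unit.
- rewrite -{1}(mulmx_ebase u) rank_rV u0 /= {1}[col_ebase u]mx11_scalar.
  by rewrite mul_scalar_mx scalemxAl.
Qed.

Lemma unitmx_transitive_rV (K : fieldType) n (u v : 'rV[K]_n) : u != 0 -> v != 0 ->
  exists2 M, M \in unitmx & u *m M = v.
Proof.
move=> /rV_unitmx_ebase[a [A [a0 A_unit ->]]] /rV_unitmx_ebase[b [B [b0 B_unit ->]]].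
exists ((b / a) *: (invmx A *m B)).
  by rewrite unitmxZ ?unitfE ?mulf_neq0 ?invr_eq0 // unitmx_mul unitmx_inv A_unit.
rewrite -scalemxAl -scalemxAr scalerA mulrC divfK //; congr (_ *: _).
by rewrite -!mulmxA (mulmxA A) mulmxV // mul1mx.
Qed.

Lemma card_rV_F2 m : #|{: 'rV['F_2]_m}| = (2 ^ m)%N.
Proof. by rewrite card_mx card_Fp // mul1n. Qed.

Section Flats.
Variables n d : nat.
Local Notation flats := (flats n d).

Lemma flatP (Q : {set F2n n}) :
  reflect (exists x0 (U : 'M['F_2]_(d, n)),
             \rank U = d /\ Q = [set x0 + v *m U | v : 'rV_d])
          (Q \in flats).
Proof.
rewrite inE; apply: (iffP existsP) => [[x0 /existsP[U /andP[/eqP rU /eqP ->]]]|].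
  by exists x0, U.
by case=> x0 [U [rU ->]]; exists x0; apply/existsP; exists U; rewrite rU !eqxx.
Qed.

Lemma flat_param_inj x0 (U : 'M['F_2]_(d, n)) : \rank U = d ->
  injective (fun v : 'rV_d => x0 + v *m U).
Proof. by move=> rU v w /addrI; apply: row_free_inj; rewrite /row_free rU. Qed.

Lemma card_flat Q : Q \in flats -> #|Q| = (2 ^ d)%N.
Proof.
by case/flatP=> x0 [U [rU ->]]; rewrite card_imset ?card_rV_F2 //; apply: flat_param_inj.
Qed.

Lemma card_flats_gt0 : (d <= n)%N -> (0 < #|flats|)%N.
Proof.
move=> dn; apply/card_gt0P; exists [set 0 + v *m pid_mx d | v : 'rV['F_2]_d].
by apply/flatP; exists 0, (pid_mx d); rewrite rank_pid_mx.
Qed.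

Lemma affine_image_flat (M : 'M['F_2]_n) b Q : M \in unitmx -> Q \in flats ->
  [set x *m M + b | x in Q] \in flats.
Proof.
move=> M_unit /flatP[x0 [U [rU ->]]]; apply/flatP.
exists (x0 *m M + b), (U *m M); split; first by rewrite mxrankMfree ?row_free_unit.
by rewrite -imset_comp; apply: eq_imset => v /=; rewrite mulmxDl mulmxA addrAC.
Qed.

Lemma pair_count_affine (M : 'M['F_2]_n) b x y : M \in unitmx ->
  pair_count flats (x *m M + b) (y *m M + b) = pair_count flats x y.
Proof.
move=> M_unit; apply: (pair_count_bij (g := fun z => z *m M + b)
                             (g' := fun z => z *m invmx M - b *m invmx M)).
- by move=> z; rewrite -mulmxBl addrK mulmxK.
- by move=> z; rewrite -mulmxBl mulmxKV // subrK.
- by move=> Q; apply: affine_image_flat.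
- by move=> Q; apply: affine_image_flat; rewrite unitmx_inv.
Qed.

Lemma pair_count_flats_diag x : pair_count flats x x = pair_count flats 0 0.
Proof. by rewrite -(pair_count_affine (- x) x x (unitmx1 _ _)) mulmx1 subrr. Qed.

Lemma pair_count_flats_neq x y x' y' : x != y -> x' != y' ->
  pair_count flats x y = pair_count flats x' y'.
Proof.
move=> xy x'y'; have [M M_unit yxM] : exists2 M, M \in unitmx & (y - x) *m M = y' - x'.
  by apply: unitmx_transitive_rV; rewrite subr_eq0 eq_sym.
rewrite -(pair_count_affine (x' - x *m M) x y M_unit); congr pair_count.
  by rewrite addrC subrK.
by rewrite -[y'](subrK x') -yxM mulmxBl addrCA addrC.
Qed.

End Flats.

Lemma second_moment_defect (K : realFieldType) (f g k N S T2 : K) :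
    0 < f -> 0 < k -> 1 < N ->
    N * (N - 1) * S = f * k * ((N - 1) * N + (k - 1) * (T2 - N)) ->
  g / f - (1 - (N - k) / (k * (N - 1))) =
  (N * (N - 1) * (S - (f - g) * k ^+ 2) - f * k * (k - 1) * T2)
    / (f * k ^+ 2 * N * (N - 1)).
Proof.
move=> f_gt0 k_gt0 N_gt1 moment.
rewrite [N * (N - 1) * (S - _)]mulrBr moment; field.
by rewrite !gt_eqF // ?subr_gt0; lra.
Qed.

Lemma F2_cases (a : 'F_2) : a = 0 \/ a = 1.
Proof. by case: a => -[|[|m]] //= a_lt2; [left | right]; apply: val_inj. Qed.

Local Notation R := Rdefinitions.R.

Definition lambda_half (n d : nat) : R :=
  1 - (2 ^+ n - 2 ^+ d) / (2 ^+ d * (2 ^+ n - 1)).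

Section Balance.
Variables n d : nat.
Hypotheses (d_gt0 : (0 < d)%N) (d_le_n : (d <= n)%N).
Local Notation flats := (flats n d).
Let n_gt0 : (0 < n)%N := leq_trans d_gt0 d_le_n.
Let i0 : 'I_n := Ordinal n_gt0.

Let two_expr_gt1 : 1 < 2 ^+ n :> R.
Proof. by rewrite exprn_egt1 ?ltr1n // -lt0n. Qed.

Definition balanced (A : {set F2n n}) :=
  [set Q in flats | #|Q :&: A| == (2 ^ d.-1)%N].

Definition signA (A : {set F2n n}) (x : F2n n) : R := 1 - 2 * (x \in A)%:R.

Lemma signA_sqr A x : signA A x ^+ 2 = 1.
Proof. by rewrite /signA; case: (x \in A) => /=; ring. Qed.

Lemma sum_signA_sqr A : \sum_x signA A x ^+ 2 = 2 ^+ n.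
Proof.
rewrite (eq_bigr (fun _ => 1)) => [|x _]; last exact: signA_sqr.
by rewrite sumr_const card_rV_F2 -natrX.
Qed.

Lemma sum_signA_flat A Q : Q \in flats ->
  \sum_(x in Q) signA A x = 2 ^+ d - 2 * #|Q :&: A|%:R.
Proof.
move=> Q_flat; rewrite sumrB sumr_const (card_flat Q_flat) natrX -mulr_sumr.
congr (_ - 2 * _); rewrite -sum1_card natr_sum [LHS]big_mkcond [RHS]big_mkcond.
by apply: eq_bigr => x _; rewrite inE; case: (x \in Q); case: (x \in A).
Qed.

Lemma two_exprS_pred : 2 ^+ d = 2 * 2 ^+ d.-1 :> R.
Proof. by rewrite -exprS prednK. Qed.

Lemma sqr_sum_signA_le A Q : Q \in flats ->
  (\sum_(x in Q) signA A x) ^+ 2 <=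
  (1 - (#|Q :&: A| == (2 ^ d.-1)%N)%:R) * (2 ^+ d) ^+ 2.
Proof.
move=> Q_flat; rewrite sum_signA_flat //.
have meet_ge0 : (0 : R) <= #|Q :&: A|%:R := ler0n _ _.
have meet_le : #|Q :&: A|%:R <= 2 ^+ d :> R.
  by rewrite -natrX ler_nat -(card_flat Q_flat) subset_leq_card // subsetIl.
case: eqP => [-> | _] /=; last by nra.
by rewrite natrX two_exprS_pred; lra.
Qed.

Lemma sum_sqr_signA_le A :
  \sum_(Q in flats) (\sum_(x in Q) signA A x) ^+ 2 <=
  (#|flats|%:R - #|balanced A|%:R) * (2 ^+ d) ^+ 2.
Proof.
rewrite (_ : _ * _ = \sum_(Q in flats)
    (1 - (#|Q :&: A| == (2 ^ d.-1)%N)%:R) * (2 ^+ d) ^+ 2 :> R).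
  by apply: ler_sum => Q; apply: sqr_sum_signA_le.
by rewrite -mulr_suml sumrB sumr_const sum_indicator.
Qed.

Lemma flats_second_moment (h : F2n n -> R) :
  2 ^+ n * (2 ^+ n - 1) * \sum_(Q in flats) (\sum_(x in Q) h x) ^+ 2 =
  #|flats|%:R * 2 ^+ d * ((2 ^+ n - 1) * \sum_x h x ^+ 2
                          + (2 ^+ d - 1) * ((\sum_x h x) ^+ 2 - \sum_x h x ^+ 2)).
Proof.
have e_neq0 : (0 : F2n n) != delta_mx 0 i0.
  by apply/eqP => /matrixP/(_ 0 i0); rewrite !mxE !eqxx; apply/eqP; rewrite eq_sym oner_eq0.
have := design_second_moment (@card_flat n d) (@pair_count_flats_diag n d)
          (fun x y xy => @pair_count_flats_neq n d _ _ _ _ xy e_neq0) h.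
by rewrite card_rV_F2 !natrX.
Qed.

Lemma second_moment_signA A :
  2 ^+ n * (2 ^+ n - 1) * \sum_(Q in flats) (\sum_(x in Q) signA A x) ^+ 2 =
  #|flats|%:R * 2 ^+ d * ((2 ^+ n - 1) * 2 ^+ n
                          + (2 ^+ d - 1) * ((\sum_x signA A x) ^+ 2 - 2 ^+ n)).
Proof. by rewrite flats_second_moment sum_signA_sqr. Qed.

Lemma lambda_half_defect (A : {set F2n n}) :
  lambdaA d (2 ^ d.-1) A - lambda_half n d =
  (2 ^+ n * (2 ^+ n - 1) * (\sum_(Q in flats) (\sum_(x in Q) signA A x) ^+ 2
                            - (#|flats|%:R - #|balanced A|%:R) * (2 ^+ d) ^+ 2)
   - #|flats|%:R * 2 ^+ d * (2 ^+ d - 1) * (\sum_x signA A x) ^+ 2)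
  / (#|flats|%:R * (2 ^+ d) ^+ 2 * 2 ^+ n * (2 ^+ n - 1)).
Proof.
apply: second_moment_defect (second_moment_signA A).
- by rewrite ltr0n card_flats_gt0.
- by rewrite exprn_gt0.
- exact: two_expr_gt1.
Qed.

Lemma lambdaA_le (A : {set F2n n}) : lambdaA d (2 ^ d.-1) A <= lambda_half n d.
Proof.
rewrite -subr_le0 lambda_half_defect pmulr_lle0 ?invr_gt0; last first.
  by rewrite !mulr_gt0 ?exprn_gt0 ?ltr0n ?card_flats_gt0 ?subr_gt0.
have N_gt1 := two_expr_gt1.
have K_ge1 : 1 <= 2 ^+ d :> R by rewrite exprn_ege1 ?ler1n.
have : 2 ^+ n * (2 ^+ n - 1) * (\sum_(Q in flats) (\sum_(x in Q) signA A x) ^+ 2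
         - (#|flats|%:R - #|balanced A|%:R) * (2 ^+ d) ^+ 2) <= 0 :> R.
  by rewrite mulr_ge0_le0 ?subr_le0 ?sum_sqr_signA_le // mulr_ge0 ?subr_ge0; lra.
have : 0 <= #|flats|%:R * 2 ^+ d * (2 ^+ d - 1) * (\sum_x signA A x) ^+ 2 :> R.
  by rewrite mulr_ge0 ?sqr_ge0 // !mulr_ge0 ?ler0n ?exprn_ge0 ?subr_ge0.
lra.
Qed.

Definition halfspace (i : 'I_n) : {set F2n n} := [set x : F2n n | x 0 i == 1].

Lemma signA_halfspace_shift i (x u : F2n n) : u 0 i = 1 ->
  signA (halfspace i) (x + u) = - signA (halfspace i) x.
Proof.
by move=> ui; rewrite /signA !inE mxE ui; case: (F2_cases (x 0 i)) => -> /=; ring.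
Qed.

Lemma sum_signA_coset_flip i m (U : 'M['F_2]_(m, n)) (z : F2n n) (w : 'rV_m) :
  (w *m U) 0 i = 1 -> \sum_(v : 'rV_m) signA (halfspace i) (z + v *m U) = 0.
Proof.
move=> wUi; set S := \sum_v _; suff : S = - S by lra.
rewrite {1}/S (reindex_inj (addIr w)) /= -sumrN; apply: eq_bigr => v _.
by rewrite mulmxDl addrA (signA_halfspace_shift _ wUi).
Qed.

Lemma sum_signA_coset_const i m (U : 'M['F_2]_(m, n)) (z : F2n n) :
    (forall w : 'rV_m, (w *m U) 0 i = 0) ->
  \sum_(v : 'rV_m) signA (halfspace i) (z + v *m U) = 2 ^+ m * signA (halfspace i) z.
Proof.
move=> Ui0; rewrite (eq_bigr (fun _ => signA (halfspace i) z)) => [|v _].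
  by rewrite sumr_const card_rV_F2 -natrX mulr_natl.
by rewrite /signA !inE mxE Ui0 addr0.
Qed.

Lemma sqr_sum_signA_halfspace i Q : Q \in flats ->
  (\sum_(x in Q) signA (halfspace i) x) ^+ 2 =
  (1 - (#|Q :&: halfspace i| == (2 ^ d.-1)%N)%:R) * (2 ^+ d) ^+ 2.
Proof.
move=> Q_flat; have := sum_signA_flat (halfspace i) Q_flat.
case/flatP: Q_flat => x0 [U [rU ->]].
rewrite big_imset /=; last by move=> v w _ _; apply: flat_param_inj.
have [/existsP[w /eqP wUi] | /existsPn U_i0] := boolP [exists w : 'rV_d, (w *m U) 0 i == 1].
  rewrite (sum_signA_coset_flip x0 wUi) => balanced_meet.
  have -> : #|[set x0 + v *m U | v : 'rV_d] :&: halfspace i| = (2 ^ d.-1)%N.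
    by apply/eqP; rewrite -(eqr_nat R) natrX; apply/eqP; move: balanced_meet;
       rewrite two_exprS_pred; lra.
  by rewrite eqxx /=; ring.
rewrite sum_signA_coset_const => [meet|w]; last first.
  by case: (F2_cases ((w *m U) 0 i)) (U_i0 w) => -> //; rewrite eqxx.
have K_gt0 : 0 < 2 ^+ d :> R by rewrite exprn_gt0.
case: eqP meet => [-> | _ _] /=; last by rewrite exprMn signA_sqr; ring.
rewrite natrX two_exprS_pred => /(congr1 (fun t => t ^+ 2)).
by rewrite exprMn signA_sqr; nra.
Qed.

Lemma sum_signA_halfspace i : \sum_x signA (halfspace i) x = 0.
Proof.
have e_i : (delta_mx 0 i *m 1%:M : F2n n) 0 i = 1 by rewrite mulmx1 mxE !eqxx.
have := sum_signA_coset_flip 0 e_i.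
by under eq_bigr => v _ do rewrite add0r mulmx1.
Qed.

Lemma lambdaA_halfspace i : lambdaA d (2 ^ d.-1) (halfspace i) = lambda_half n d.
Proof.
apply/eqP; rewrite -subr_eq0 lambda_half_defect sum_signA_halfspace.
rewrite (eq_bigr _ (fun Q => sqr_sum_signA_halfspace i (Q := Q))).
by rewrite -mulr_suml sumrB sumr_const sum_indicator -/(balanced _) subrr expr0n !mulr0 subrr mul0r.
Qed.

Lemma lambdan_half : lambdan n d (2 ^ d.-1) = lambda_half n d.
Proof.
apply/le_anti/andP; split.
  apply: bigmax_le => [|A _]; last exact: lambdaA_le.
  by rewrite -(lambdaA_halfspace i0) divr_ge0.
by rewrite -(lambdaA_halfspace i0); apply: le_bigmax.
Qed.

End Balance.

Lemma lambda_half_dist n d : (0 < n)%N ->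
  `|1 - 2 ^- d - lambda_half n d| <= 2 / 2 ^+ n.
Proof.
move=> n_gt0; have N_ge2 : 2 <= 2 ^+ n :> R.
  by rewrite -[leLHS]expr1 ler_eXn2l // ltr1n.
have K_ge1 : 1 <= 2 ^+ d :> R by rewrite exprn_ege1 // ler1n.
have -> : 1 - 2 ^- d - lambda_half n d = - ((2 ^+ d - 1) / (2 ^+ d * (2 ^+ n - 1))).
  by rewrite /lambda_half; field; rewrite !gt_eqF //; lra.
rewrite normrN ger0_norm ?divr_ge0 ?mulr_ge0 ?subr_ge0 //; try lra.
rewrite ler_pdivrMr ?mulr_gt0 ?subr_gt0 //; try lra.
by rewrite mulrAC ler_pdivlMr; nra.
Qed.

Local Open Scope classical_set_scope.

Lemma lambda_half_cvg d : lambda_half n d @[n --> \oo] --> (1 - 2 ^- d : R).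
Proof.
apply/(@cvgrPdist_le R R^o) => eps eps_gt0.
have half_eps_gt0 : 0 < eps / 2 by rewrite divr_gt0.
near=> n; apply: le_trans (lambda_half_dist d _) _; first by near: n; exists 1%N.
have : 1 / 2 ^+ n < eps / 2 by near: n; apply: (near_infty_natSinv_expn_lt (PosNum half_eps_gt0)).
by lra.
Unshelve. all: by end_near.
Qed.

Theorem theorem1p4 (d : nat) (hd : (1 < d)%N) :
  (fun n : nat => lambdan n d (2 ^ d.-1)%N) @ \oo --> (1 - 2 ^- d : Rdefinitions.R).
Proof.
apply: cvg_trans _ (@lambda_half_cvg d); apply: near_eq_cvg.
near=> n; rewrite lambdan_half ?(ltnW hd) //.
by near: n; exists d.
Unshelve. all: by end_near.
Qed.
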